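(* Let $B=F(b_1,\ldots,b_n)$ be a Ferrers board with $0\le b_1\le\cdots\le b_n$. Then, as polynomials in $x$, $$x^n=\sum_{k=0}^n \mathbf{rT}_{n-k}(B,p,q)\,(x-F_{b_1}(p,q))(x-F_{b_2}(p,q))\cdots(x-F_{b_k}(p,q)),$$ where the empty product ($k=0$) equals 1.
   Context: For $m\ge 1$, a Fibonacci tiling of height $m$ is a tiling of a column of height $m$ by tiles of height 1 and height 2 whose bottom-most tile has height 1. For such a tiling $T$, $\mathrm{one}(T)$ and $\mathrm{two}(T)$ denote the numbers of tiles of height 1 and 2, and $F_m(p,q)=\sum_T q^{\mathrm{one}(T)}p^{\mathrm{two}(T)}$ over all Fibonacci tilings of height $m$ (so $F_1=q$, $F_2=q^2$, $F_m=qF_{m-1}+pF_{m-2}$ for $m\ge 3$). There are no Fibonacci tilings of height $0$, and $F_0(p,q)=0$. A Ferrers board $F(b_1,\ldots,b_n)$ is the board whose columns, from left to right, have heights $b_1,\ldots,b_n$. A Fibonacci rook placement of $k$ tilings in $B=F(b_1,\ldots,b_n)$ consists of a choice of columns $1\le i_1<\cdots<i_k\le n$ together with, for each $s=1,\ldots,k$, a Fibonacci tiling of height $b_{i_s-(s-1)}$ placed in column $i_s$ (the number of cells of column $i_s$ not canceled by earlier tilings, each tiling canceling top cells of columns to its right so that after $s$ tilings the untiled columns have $b_1,\ldots,b_{n-s}$ uncanceled cells). Its weight is $q^{a}p^{b}$ where $a$ (resp. $b$) is the total number of tiles of height 1 (resp. 2) used. $\mathbf{rT}_k(B,p,q)$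 is the sum of the weights of all Fibonacci rook placements of $k$ tilings in $B$ (the empty placement has weight 1). *)

From mathcomp Require Import all_boot all_order all_algebra.
Set Implicit Arguments. Unset Strict Implicit. Unset Printing Implicit Defensive.
Import GRing.Theory.
Local Open Scope ring_scope.

(* A tiling of a column is listed bottom-to-top as a sequence of tile heights
   (each 1 or 2).  [all_tilings m] lists every tiling of a column of height m. *)
Fixpoint all_tilings (m : nat) : seq (seq nat) :=
  match m with
  | 0 => [:: [::]]
  | 1 => [:: [:: 1%N]]
  | (m'.+1 as m1).+1 =>
      map (cons 1%N) (all_tilings m1) ++ map (cons 2%N) (all_tilings m')
  end.

Definition fib_tilings (m : nat) : seq (seq nat) :=
  match m with
  | 0 => [::]
  | m'.+1 => map (cons 1%N) (all_tilings m')
  end.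

Definition tiling_weight (R : comNzRingType) (p q : R) (T : seq nat) : R :=
  q ^+ count_mem 1%N T * p ^+ count_mem 2%N T.

Definition Fib (R : comNzRingType) (m : nat) (p q : R) : R :=
  \sum_(T <- fib_tilings m) tiling_weight p q T.

(* Ferrers board F(b_1,...,b_n) is given by the list b of column heights
   (0-indexed: b`_0 = b_1).  A Fibonacci rook placement of k tilings is a
   strictly increasing k-tuple of columns (i_0 < ... < i_{k-1}, 0-indexed)
   together with, for each s < k, a Fibonacci tiling of height b`_(i_s - s)
   (the 1-indexed b_{i_s-(s-1)}).  The sum over the tilings of the weights of
   the placement factors as the product of the F's below. *)
Definition rT (R : comNzRingType) (k : nat) (b : seq nat) (p q : R) : R :=
  \sum_(t : k.-tuple 'I_(size b) | sorted ltn (map val t))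
    \prod_(s < k)
      Fib (nth 0%N b (val (tnth t s) - val s)) p q.

From mathcomp Require Import all_boot all_order all_algebra.
From mathcomp Require Import ring zify.
Set Implicit Arguments. Unset Strict Implicit. Unset Printing Implicit Defensive.
Import GRing.Theory.
Local Open Scope ring_scope.

(* Writing a = (F_(b_1), F_(b_2), ...), the substitution c_s = i_s - s turns
   the column choices i_0 < ... < i_(m-1) < n of a placement of m tilings into
   the weakly increasing sequences 0 <= c_0 <= ... <= c_(m-1) <= n - m, so
   rT_m(B) is the complete homogeneous symmetric polynomial
   h_m(a_1, ..., a_(n-m+1)).  The theorem is then Newton's expansion
   x^N = sum_k h_(N-k)(a_1, ..., a_(k+1)) (x - a_1) ... (x - a_k), proved by
   induction on N from x P_k = P_(k+1) + a_(k+1) P_k and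
   h_m(a_1..a_(k+1)) = h_m(a_1..a_k) + a_(k+1) h_(m-1)(a_1..a_(k+1)). *)

Lemma big_tuple0 (R : nmodType) (T : finType) (F : 0.-tuple T -> R) :
  \sum_(t : 0.-tuple T) F t = F [tuple].
Proof. by rewrite (big_pred1 [tuple]) // => t; rewrite /= [t]tuple0; apply/esym/eqP. Qed.

Lemma big_tuple_cons (R : nmodType) (T : finType) m (F : m.+1.-tuple T -> R) :
  \sum_(t : m.+1.-tuple T) F t =
  \sum_(x : T) \sum_(t : m.-tuple T) F [tuple of x :: t].
Proof.
rewrite pair_bigA (reindex (fun p : T * m.-tuple T => [tuple of p.1 :: p.2])) //=.
exists (fun t : m.+1.-tuple T => (thead t, [tuple of behead t])).
  by case=> x t _; rewrite /= theadE; congr (_, _); apply: val_inj.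
by move=> t _; rewrite [RHS]tuple_eta.
Qed.

Lemma big_nat_cut (R : nmodType) (i j u : nat) (G : nat -> R) : (j <= u)%N ->
  (forall c, (j <= c < u)%N -> G c = 0) ->
  \sum_(i <= c < u) G c = \sum_(i <= c < j) G c.
Proof.
move=> le_ju G0.
rewrite (big_nat_widen _ _ _ _ _ le_ju) big_mkcond [RHS]big_mkcond.
apply: eq_big_nat => c /andP[_ lt_cu] /=.
by case: ltnP => // le_jc; rewrite G0 ?le_jc.
Qed.

Section CompleteHomogeneous.
Variables (R : comNzRingType) (a : nat -> R).

(* [hcomplete m i j] is the complete homogeneous symmetric polynomial
   h_m(a_i, ..., a_(j-1)), expanded along its smallest index. *)
Fixpoint hcomplete (m i j : nat) : R :=
  if m is m'.+1 then \sum_(i <= c < j) a c * hcomplete m' c j else 1.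

Lemma hcompleteS m i j :
  hcomplete m.+1 i j = \sum_(i <= c < j) a c * hcomplete m c j.
Proof. by []. Qed.

Lemma hcomplete_eq0 m i j : (j <= i)%N -> hcomplete m.+1 i j = 0.
Proof. by move=> le_ji; rewrite hcompleteS big_geq. Qed.

Lemma hcomplete_recr m i j : (i <= j)%N ->
  hcomplete m.+1 i j.+1 = hcomplete m.+1 i j + a j * hcomplete m i j.+1.
Proof.
elim: m i j => [|m IHm] i j le_ij; first by rewrite !hcompleteS big_nat_recr.
rewrite hcompleteS big_nat_recr // (hcompleteS m j) big_nat1.
rewrite [in RHS](hcompleteS m i j.+1) big_nat_recr //.
under eq_big_nat => c /andP[_ lt_cj] do rewrite IHm 1?ltnW // mulrDr mulrCA.
by rewrite big_split -mulr_sumr -hcompleteS mulrDr addrA.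
Qed.

End CompleteHomogeneous.

Section NewtonExpansion.
Variables (R : comNzRingType) (a : nat -> R).

Definition newton_basis (k : nat) : {poly R} := \prod_(j < k) ('X - (a j)%:P).

Lemma mulX_newton_basis k :
  'X * newton_basis k = newton_basis k.+1 + (a k)%:P * newton_basis k.
Proof.
by rewrite /newton_basis big_ord_recr /= mulrBr [(a k)%:P * _]mulrC subrK mulrC.
Qed.

Lemma expX_newton N :
  'X ^+ N = \sum_(0 <= k < N.+1) (hcomplete a (N - k) 0 k.+1)%:P * newton_basis k.
Proof.
elim: N => [|N IHN]; first by rewrite big_nat1 /newton_basis big_ord0 mulr1.
rewrite exprS IHN mulr_sumr.
under eq_bigr do rewrite mulrCA mulX_newton_basis mulrDr mulrCA mulrA -polyCM.
rewrite big_split /= big_nat_recr // big_nat_recl //.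
rewrite [RHS]big_nat_recl // [in RHS]big_nat_recr // !subn0 !subnn.
under [in RHS]eq_big_nat => i /andP[_ lt_iN].
  rewrite subSS -(subnSK lt_iN) hcomplete_recr // subnSK // polyCD mulrDl.
over.
rewrite big_split hcomplete_recr // hcomplete_eq0 // add0r /= polyC1 !mul1r.
ring.
Qed.

End NewtonExpansion.

Lemma sorted_ltn_cons_geq (lo x : nat) (s : seq nat) : (lo <= x)%N ->
  sorted ltn (x :: s) && all (leq lo) (x :: s) = sorted ltn s && all (leq x.+1) s.
Proof.
move=> le_lo_x; rewrite /= le_lo_x path_sortedE; last exact: ltn_trans.
case gt_x_s: (all (ltn x) s); rewrite /= ?andbF //= andbT andbC.
by rewrite (sub_all _ gt_x_s) // => y /ltnW; apply: leq_trans.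
Qed.

Section IncreasingTuples.
Variables (R : comNzRingType) (n : nat) (a : nat -> R).

(* Placements whose columns are all >= lo, after [off] tilings have already
   been placed; rT is the case lo = off = 0. *)
Definition incr_tuple_sum (m lo off : nat) : R :=
  \sum_(t : m.-tuple 'I_n | sorted ltn (map val t) && all (leq lo) (map val t))
    \prod_(s < m) a (tnth t s - (s + off)).

Lemma incr_tuple_sumS m lo off : incr_tuple_sum m.+1 lo off =
  \sum_(lo <= x < n) a (x - off) * incr_tuple_sum m x.+1 off.+1.
Proof.
rewrite /incr_tuple_sum big_mkcond big_tuple_cons big_geq_mkord.
rewrite (bigID (fun x : 'I_n => (lo <= x)%N)) /= [X in _ + X]big1 ?addr0; last first.
  move=> x; rewrite -ltnNge => lt_x_lo; rewrite big1 // => t _ /=.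
  by rewrite leqNgt lt_x_lo /= andbF.
apply: eq_bigr => x le_lo_x; rewrite mulr_sumr [RHS]big_mkcond; apply: eq_bigr => t _.
rewrite sorted_ltn_cons_geq //; case: ifP => // _.
rewrite big_ord_recl add0n; congr (_ * _); apply: eq_bigr => s _.
by rewrite tnthS addSnnS.
Qed.

Lemma incr_tuple_sum_hcomplete m lo off : (off <= lo)%N -> (m + off <= n)%N ->
  incr_tuple_sum m lo off = hcomplete a m (lo - off) (n - m - off).+1.
Proof.
elim: m lo off => [|m IHm] lo off le_off_lo le_mn.
  by rewrite /incr_tuple_sum big_mkcond big_tuple0 /= big_ord0.
rewrite incr_tuple_sumS hcompleteS; set J := (n - m.+1 - off).+1.
have shifted x : (lo <= x)%N ->
    incr_tuple_sum m x.+1 off.+1 = hcomplete a m (x - off) J.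
  by move=> le_lo_x; rewrite IHm; [rewrite /J; congr hcomplete; lia | lia | lia].
under eq_big_nat => x /andP[le_lo_x _] do rewrite shifted //.
rewrite -{1}(subnK le_off_lo) big_addn.
under eq_big_nat do rewrite addnK.
apply: big_nat_cut => [|c /andP[le_J_c lt_c_n]]; first by lia.
move: le_J_c lt_c_n; rewrite /J.
case: m {IHm shifted J} le_mn => [|m] le_mn le_J_c lt_c_n; first by lia.
by rewrite hcomplete_eq0 ?mulr0.
Qed.

End IncreasingTuples.

Lemma rT_hcomplete (R : comNzRingType) (p q : R) (b : seq nat) m :
  (m <= size b)%N ->
  rT m b p q = hcomplete (fun j => Fib (nth 0%N b j) p q) m 0 (size b - m).+1.
Proof.
move=> le_m_b.
transitivity (incr_tuple_sum (size b) (fun j => Fib (nth 0%N b j) p q) m 0 0).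
  apply: eq_big => [t | t _]; last by apply: eq_bigr => s _; rewrite addn0.
  by rewrite (@eq_all _ _ predT) // all_predT andbT.
by rewrite incr_tuple_sum_hcomplete ?addn0 ?subn0.
Qed.

Theorem theorem4 (R : comNzRingType) (p q : R) (b : seq nat) :
  sorted leq b ->
  'X ^+ size b =
  \sum_(k < (size b).+1)
     (rT (size b - k) b p q)%:P *
     \prod_(j < k) ('X - (Fib (nth 0%N b j) p q)%:P) :> {poly R}.
Proof.
(* The identity holds for every sequence of column heights. *)
move=> _; rewrite (expX_newton (fun j => Fib (nth 0%N b j) p q)) big_mkord.
by apply: eq_bigr => k _; rewrite rT_hcomplete ?leq_subr // subKn // -ltnS.
Qed.
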